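(* Let $n\geq2$, $p\in\mathbb{N}$, $s\in[p]$ and $t_0\in[n-1]$. Let $\Sigma_1,\Sigma_2\in\mathbb{R}^{p\times p}$ be symmetric positive definite and $\sigma^2=\|\Sigma_1\|_{\mathrm{op}}\vee\|\Sigma_2\|_{\mathrm{op}}$. Let $\Delta=\min(t_0,n-t_0)$ and $\gamma=s\log(ep/s)\vee\log\log(8n)$. Suppose that for some constant $c>0$, $$\Delta\Big\{\Big(\frac{\lambda^s_{\max}(\Sigma_1-\Sigma_2)}{\sigma^2-\lambda^s_{\max}(\Sigma_1-\Sigma_2)}\Big)\wedge\Big(\frac{\lambda^s_{\max}(\Sigma_1-\Sigma_2)}{\sigma^2-\lambda^s_{\max}(\Sigma_1-\Sigma_2)}\Big)^2\Big\}\geq c\gamma.$$ Then $$\sup_{v\in S^{p-1}_s}\ \frac{v^\top\Sigma_1v}{v^\top\Sigma_2v}\vee\frac{v^\top\Sigma_2v}{v^\top\Sigma_1v}\geq 1+c\frac{\gamma}{\Delta}\vee\sqrt{c\frac{\gamma}{\Delta}}.$$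
   Context: $S^{p-1}_s=\{v\in\mathbb{R}^p:\|v\|_2=1,\ \|v\|_0\leq s\}$, and for symmetric $A$, $\lambda^s_{\max}(A)=\sup_{v\in S^{p-1}_s}|v^\top Av|$. $\log$ is the natural logarithm. *)

From HB Require Import structures.
From mathcomp Require Import all_boot all_order all_algebra.
From mathcomp Require Import all_classical all_reals all_analysis.
Unset Strict Implicit. Unset Printing Implicit Defensive.
Import Order.TTheory GRing.Theory Num.Theory.
Local Open Scope ring_scope.
Local Open Scope classical_set_scope.

Section Defs.
Context {R : realType}.

Definition qform {p : nat} (A : 'M[R]_p) (v : 'cV[R]_p) : R :=
  (v^T *m A *m v) 0 0.

Definition norm2 {p : nat} (v : 'cV[R]_p) : R :=
  Num.sqrt (\sum_(i < p) v i 0 ^+ 2).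

Definition l0 {p : nat} (v : 'cV[R]_p) : nat := #|[set i | v i 0 != 0]|.

Definition sparse_sphere (p s : nat) : set 'cV[R]_p :=
  [set v | norm2 v = 1 /\ (l0 v <= s)%N].

Definition symmetric {p : nat} (A : 'M[R]_p) : Prop := A^T = A.

Definition pos_def {p : nat} (A : 'M[R]_p) : Prop :=
  symmetric A /\ forall v : 'cV[R]_p, v != 0 -> 0 < qform A v.

Definition opnorm {p : nat} (A : 'M[R]_p) : R :=
  sup [set norm2 (A *m v) | v in [set v : 'cV[R]_p | norm2 v = 1]].

Definition lambda_s_max {p : nat} (s : nat) (A : 'M[R]_p) : R :=
  sup [set `|qform A v| | v in sparse_sphere p s].

End Defs.

From Pilot Require Import Defs.
From HB Require Import structures.
From mathcomp Require Import all_boot all_order all_algebra.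
From mathcomp Require Import all_classical all_reals all_analysis.
From mathcomp Require Import ring lra zify.
Import Order.TTheory GRing.Theory Num.Theory.
Local Open Scope ring_scope.
Local Open Scope classical_set_scope.

(* Both quadratic forms are positive and at most sigma^2 on the sparse sphere.  If r bounds
   v'S1v / v'S2v and its inverse, then |v'S1v - v'S2v| r <= sigma^2 (r - 1); taking the
   supremum over v with r the supremum R of the ratios gives lambda R <= sigma^2 (R - 1),
   i.e. x := lambda / (sigma^2 - lambda) <= R - 1.  The hypothesis says exactly that
   c gamma / Delta is at most x and x^2.  R is finite since a positive definite form is
   bounded below on the unit sphere. *)

Section QuadraticForms.
Context {R : realType} {p : nat}.
Implicit Types (A S : 'M[R]_p) (v w : 'cV[R]_p).

Definition bform A v w : R := (v^T *m A *m w) 0 0.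

Lemma bform_sym S v w : Defs.symmetric S -> bform S w v = bform S v w.
Proof.
move=> symS; rewrite /bform.
transitivity ((w^T *m S *m v)^T 0 0); first by rewrite [RHS]mxE.
by rewrite !trmx_mul trmxK symS mulmxA.
Qed.

Lemma bform0r A v : bform A v 0 = 0.
Proof. by rewrite /bform mulmx0 mxE. Qed.

Lemma qform0 A : qform A 0 = 0.
Proof. by rewrite /qform mulmx0 mxE. Qed.

Lemma qformB A B v : qform (A - B) v = qform A v - qform B v.
Proof. by rewrite /qform mulmxBr mulmxBl !mxE. Qed.

Lemma qform_subZ S v w t : Defs.symmetric S ->
  qform S (v - t *: w) = qform S v - 2 * t * bform S v w + t ^+ 2 * qform S w.
Proof.
move=> symS; have := bform_sym S v w symS; rewrite /bform /qform.
have -> : (v - t *: w)^T = v^T - t *: w^T by rewrite linearB linearZ.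
rewrite !mulmxBl !mulmxBr -!scalemxAl -!scalemxAr !mxE => ->.
ring.
Qed.

Lemma pos_def_qform_ge0 S v : pos_def S -> 0 <= qform S v.
Proof.
case=> _ posS; have [->|v0] := eqVneq v 0; first by rewrite qform0.
exact/ltW/posS.
Qed.

Lemma pos_def_cauchy_schwarz S v w : pos_def S ->
  bform S v w ^+ 2 <= qform S v * qform S w.
Proof.
move=> pdS; have [->|w0] := eqVneq w 0.
  by rewrite bform0r qform0 expr0n mulr0.
have c0 : 0 < qform S w by case: pdS => _; apply.
set b := bform S v w; set c := qform S w; set t := b / c.
have tc : t * c = b by rewrite mulfVK ?gt_eqF.
have := pos_def_qform_ge0 S (v - t *: w) pdS.
rewrite qform_subZ; last by case: pdS.
rewrite -/b -/c => /(mulr_ge0 (ltW c0)).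
have -> : c * (qform S v - 2 * t * b + t ^+ 2 * c) = qform S v * c - b ^+ 2.
  by rewrite -tc; ring.
by rewrite subr_ge0.
Qed.

Lemma bform1 v w : bform 1%:M v w = \sum_i v i 0 * w i 0.
Proof. by rewrite /bform mulmx1 mxE; apply: eq_bigr => i _; rewrite mxE. Qed.

Lemma qform1 v : qform 1%:M v = \sum_i v i 0 ^+ 2.
Proof. by rewrite [LHS]bform1; apply: eq_bigr => i _; rewrite expr2. Qed.

Lemma pos_def1 : pos_def (1%:M : 'M[R]_p).
Proof.
split; first exact: trmx1.
move=> v v0; rewrite qform1 lt_def sumr_ge0 ?andbT => [|i _]; last exact: sqr_ge0.
apply: contra v0 => /eqP /psumr_eq0P sum0; apply/eqP/matrixP => i j.
rewrite ord1 mxE; apply/eqP; rewrite -sqrf_eq0; apply/eqP/sum0 => // k _.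
exact: sqr_ge0.
Qed.

Lemma qform_mulmx A v : qform A v = bform 1%:M v (A *m v).
Proof. by rewrite /bform /qform mulmx1 mulmxA. Qed.

Lemma norm2_sqr v : norm2 v ^+ 2 = qform 1%:M v.
Proof. by rewrite qform1 sqr_sqrtr // sumr_ge0 // => i _; exact: sqr_ge0. Qed.

Lemma norm2_eq1_qform1 v : norm2 v = 1 -> qform 1%:M v = 1.
Proof. by rewrite -norm2_sqr => ->; rewrite expr1n. Qed.

Lemma norm2_eq1_neq0 v : norm2 v = 1 -> v != 0.
Proof.
move/norm2_eq1_qform1; apply: contra_eqN => /eqP ->.
by rewrite qform0 eq_sym oner_eq0.
Qed.

Lemma norm2_eq1_coord_le1 v i : norm2 v = 1 -> `|v i 0| <= 1.
Proof.
move/norm2_eq1_qform1; rewrite qform1 => sum1.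
rewrite -(expr_le1 (n := 2)) // real_normK ?num_real // -sum1.
by rewrite (bigD1 i) //= lerDl sumr_ge0 // => j _; exact: sqr_ge0.
Qed.

Lemma qform_abs_le A v : norm2 v = 1 -> `|qform A v| <= \sum_i \sum_j `|A i j|.
Proof.
move=> v1; rewrite qform_mulmx bform1.
apply: le_trans (ler_norm_sum _ _ _) _; apply: ler_sum => i _.
rewrite normrM -[X in _ <= X]mul1r ler_pM ?normr_ge0 ?norm2_eq1_coord_le1 //.
rewrite mxE; apply: le_trans (ler_norm_sum _ _ _) _; apply: ler_sum => j _.
by rewrite normrM -[X in _ <= X]mulr1 ler_pM ?normr_ge0 ?norm2_eq1_coord_le1.
Qed.

Lemma norm2_mulmx_le A v : norm2 v = 1 ->
  norm2 (A *m v) <= Num.sqrt (\sum_i (\sum_j `|A i j|) ^+ 2).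
Proof.
move=> v1; apply: ler_wsqrtr; apply: ler_sum => i _.
rewrite -real_normK ?num_real // lerXn2r ?nnegrE ?sumr_ge0 //.
rewrite mxE; apply: le_trans (ler_norm_sum _ _ _) _; apply: ler_sum => j _.
by rewrite normrM -[X in _ <= X]mulr1 ler_pM ?normr_ge0 ?norm2_eq1_coord_le1.
Qed.

Lemma qform_le_norm2 A v : norm2 v = 1 -> qform A v <= norm2 (A *m v).
Proof.
move=> v1; apply: le_trans (ler_norm _) _.
rewrite -sqrtr_sqr -[X in _ <= X]ger0_norm ?sqrtr_ge0 // -sqrtr_sqr.
apply: ler_wsqrtr; rewrite norm2_sqr [qform A v]qform_mulmx.
have := pos_def_cauchy_schwarz 1%:M v (A *m v) pos_def1.
by rewrite norm2_eq1_qform1 ?mul1r.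
Qed.

Lemma qform_le_opnorm A v : norm2 v = 1 -> qform A v <= opnorm A.
Proof.
move=> v1; apply: le_trans (qform_le_norm2 A v v1) _.
apply: sup_upper_bound; last by exists v.
split; first by exists (norm2 (A *m v)), v.
exists (Num.sqrt (\sum_i (\sum_j `|A i j|) ^+ 2)) => _ [w w1 <-].
exact: norm2_mulmx_le.
Qed.

Lemma pos_def_unitmx S : pos_def S -> S \in unitmx.
Proof.
move=> pdS; rewrite -row_free_unit; apply: inj_row_free => u uS0.
apply: trmx_inj; rewrite trmx0; apply/eqP; apply: contraT => u0.
have := proj2 pdS _ u0.
by rewrite /qform trmxK uS0 mul0mx mxE ltxx.
Qed.

(* Cauchy-Schwarz gives [1 = (v^T S (S^-1 v))^2 <= (v^T S v) ((S^-1 v)^T S (S^-1 v))],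
   and the last factor is a quadratic form in [v], bounded on the unit sphere. *)
Lemma pos_def_qform_ge S : pos_def S ->
  exists2 L, 0 < L & forall v, norm2 v = 1 -> L <= qform S v.
Proof.
move=> pdS; have unitS := pos_def_unitmx S pdS.
set M := (invmx S)^T *m S *m invmx S; set K := \sum_i \sum_j `|M i j|.
have K0 : 0 <= K by rewrite sumr_ge0 // => i _; rewrite sumr_ge0.
exists (K + 1)^-1; first by rewrite invr_gt0; lra.
move=> v v1; set y := invmx S *m v.
have yK : qform S y <= K.
  have -> : qform S y = qform M v by rewrite /qform /M /y trmx_mul !mulmxA.
  exact: le_trans (ler_norm _) (qform_abs_le M _ v1).
have vy1 : bform S v y = 1.
  rewrite /bform /y mulmxA -(mulmxA _ S) mulmxV // mulmx1.
  by rewrite -(norm2_eq1_qform1 _ v1) /qform mulmx1.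
have := pos_def_cauchy_schwarz S v y pdS; rewrite vy1 expr1n => CS.
have := pos_def_qform_ge0 S v pdS; have := pos_def_qform_ge0 S y pdS.
rewrite -[(K + 1)^-1]mul1r ler_pdivrMr; [nra | lra].
Qed.

End QuadraticForms.

Lemma max_ratio_ge1 {R : realFieldType} (a b : R) : 0 < a -> 0 < b ->
  1 <= Num.max (a / b) (b / a).
Proof.
move=> a0 b0; rewrite le_max !ler_pdivlMr // !mul1r.
by case: leP => // /ltW ->.
Qed.

(* For [a <= b]: [m (r - 1) - (b - a) r = (r - 1) (m - b) + (r a - b)], a sum of nonnegatives. *)
Lemma normB_mul_le_of_max_ratio {R : realFieldType} (a b m r : R) :
  0 < a -> 0 < b -> a <= m -> b <= m -> Num.max (a / b) (b / a) <= r ->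
  `|a - b| * r <= m * (r - 1).
Proof.
move=> a0 b0 am bm ratio_le.
have r1 := le_trans (max_ratio_ge1 a b a0 b0) ratio_le.
move: ratio_le; rewrite ge_max !ler_pdivrMr // => /andP[ab ba].
have [le_ab|lt_ba] := leP a b.
  have : 0 <= (r - 1) * (m - b) by rewrite mulr_ge0 ?subr_ge0.
  by rewrite ler0_norm ?subr_le0 //; nra.
have : 0 <= (r - 1) * (m - a) by rewrite mulr_ge0 ?subr_ge0.
by rewrite gtr0_norm ?subr_gt0 //; nra.
Qed.

Lemma sparse_sphere_delta (R : realType) p s (i : 'I_p) : (1 <= s)%N ->
  sparse_sphere p s (delta_mx i 0 : 'cV[R]_p).
Proof.
move=> s1; split.
  rewrite /norm2 (bigD1 i) //= big1 => [|j /negbTE ji]; last by rewrite mxE ji expr0n.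
  by rewrite mxE !eqxx expr1n addr0 sqrtr1.
rewrite /l0 (@eq_card _ _ (pred1 i)) ?card1 // => j.
apply/idP/idP => [|/eqP ->]; rewrite in_setE /= mxE ?eqxx ?andbT ?oner_neq0 //.
by rewrite pnatr_eq0 eqb0 negbK inE eq_sym.
Qed.

Lemma lambda_s_max_ge0 (R : realType) p s (A : 'M[R]_p) : 0 <= lambda_s_max s A.
Proof.
rewrite /lambda_s_max; set E := [set `|qform A v| | v in _].
have [supE|noSup] := pselect (has_sup E); last by rewrite sup_out.
have [x Ex] := supE.1; apply: le_trans (sup_upper_bound supE Ex).
by case: Ex => v _ <-.
Qed.

Lemma sparse_sphere_qform_gt0 {R : realType} {p s} {S : 'M[R]_p} {v} :
  pos_def S -> sparse_sphere p s v -> 0 < qform S v.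
Proof. by case=> _ posS [v1 _]; apply/posS/norm2_eq1_neq0. Qed.

Section SparseRatio.
Context {R : realType} {p s : nat} {S1 S2 : 'M[R]_p}.
Hypotheses (s_range : (1 <= s <= p)%N) (pd1 : pos_def S1) (pd2 : pos_def S2).

Local Notation sigma2 := (Num.max (opnorm S1) (opnorm S2)).
Local Notation lam := (lambda_s_max s (S1 - S2)).
Local Notation ratio v :=
  (Num.max (qform S1 v / qform S2 v) (qform S2 v / qform S1 v)).
Local Notation ratios := [set ratio v | v in sparse_sphere p s].

Let sphere_nonempty : @sparse_sphere R p s !=set0.
Proof.
case/andP: s_range => s1 sp.
by exists (delta_mx (Ordinal (leq_trans s1 sp)) 0); exact: sparse_sphere_delta.
Qed.

Let qform_le_sigma2 v : sparse_sphere p s v ->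
  qform S1 v <= sigma2 /\ qform S2 v <= sigma2.
Proof. by case=> v1 _; rewrite !le_max !qform_le_opnorm ?orbT. Qed.

Lemma has_sup_ratios : has_sup ratios.
Proof.
have [L1 L1_gt0 L1_le] := pos_def_qform_ge S1 pd1.
have [L2 L2_gt0 L2_le] := pos_def_qform_ge S2 pd2.
split; first by have [v sv] := sphere_nonempty; exists (ratio v), v.
exists (sigma2 / L2 + sigma2 / L1) => _ [v sv <-].
have [q1 q2] := qform_le_sigma2 _ sv; have [v1 _] := sv.
have a0 := sparse_sphere_qform_gt0 pd1 sv; have b0 := sparse_sphere_qform_gt0 pd2 sv.
have sigma2_ge0 : 0 <= sigma2 := ltW (lt_le_trans a0 q1).
have r1 : qform S1 v / qform S2 v <= sigma2 / L2.
  by apply: ler_pM; rewrite ?invr_ge0 ?(ltW a0) ?(ltW b0) // lef_pV2 ?posrE ?L2_le.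
have r2 : qform S2 v / qform S1 v <= sigma2 / L1.
  by apply: ler_pM; rewrite ?invr_ge0 ?(ltW a0) ?(ltW b0) // lef_pV2 ?posrE ?L1_le.
rewrite ge_max; apply/andP; split.
- by apply: le_trans r1 _; rewrite lerDl divr_ge0 ?(ltW L1_gt0).
- by apply: le_trans r2 _; rewrite lerDr divr_ge0 ?(ltW L2_gt0).
Qed.

Lemma ratio_le_sup {v} : sparse_sphere p s v -> ratio v <= sup ratios.
Proof. by move=> sv; apply: sup_upper_bound; [exact: has_sup_ratios | exists v]. Qed.

Lemma sup_ratios_ge1 : 1 <= sup ratios.
Proof.
have [v sv] := sphere_nonempty; apply: le_trans (ratio_le_sup sv).
by apply: max_ratio_ge1; exact: sparse_sphere_qform_gt0 sv.
Qed.

Lemma lambda_mul_sup_ratios_le : lam * sup ratios <= sigma2 * (sup ratios - 1).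
Proof.
have sup_gt0 : 0 < sup ratios := lt_le_trans ltr01 sup_ratios_ge1.
have [v0 sv0] := sphere_nonempty.
rewrite -ler_pdivlMr //; apply: ge_sup; first by exists `|qform (S1 - S2) v0|, v0.
move=> _ [v sv <-]; rewrite qformB ler_pdivlMr //.
have [q1 q2] := qform_le_sigma2 _ sv.
apply: normB_mul_le_of_max_ratio q1 q2 (ratio_le_sup sv);
  exact: sparse_sphere_qform_gt0 sv.
Qed.

Lemma lambda_lt_sigma2 : lam < sigma2.
Proof.
have [v sv] := sphere_nonempty; have [q1 _] := qform_le_sigma2 _ sv.
have sigma2_gt0 := lt_le_trans (sparse_sphere_qform_gt0 pd1 sv) q1.
have := lambda_mul_sup_ratios_le; have := sup_ratios_ge1; nra.
Qed.

Lemma lambda_ratio_le : lam / (sigma2 - lam) <= sup ratios - 1.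
Proof.
rewrite ler_pdivrMr ?subr_gt0 ?lambda_lt_sigma2 //.
have := lambda_mul_sup_ratios_le; lra.
Qed.

End SparseRatio.

Theorem lemma10 (R : realType) (n p s t0 : nat) (S1 S2 : 'M[R]_p) (c : R) :
  (2 <= n)%N -> (1 <= s <= p)%N -> (1 <= t0 <= n - 1)%N ->
  pos_def S1 -> pos_def S2 -> 0 < c ->
  let sigma2 := Num.max (opnorm S1) (opnorm S2) in
  let Delta : R := (minn t0 (n - t0))%:R in
  let gamma := Num.max (s%:R * ln (expR 1 * p%:R / s%:R)) (ln (ln (8 * n%:R))) in
  let lam := lambda_s_max s (S1 - S2) in
  let x := lam / (sigma2 - lam) in
  Delta * Num.min x (x ^+ 2) >= c * gamma ->
  sup [set Num.max (qform S1 v / qform S2 v) (qform S2 v / qform S1 v)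
       | v in sparse_sphere p s]
    >= 1 + Num.max (c * gamma / Delta) (Num.sqrt (c * gamma / Delta)).
Proof.
move=> n2 s_range t0_range pd1 pd2 _ sigma2 Delta gamma lam x.
have Delta_gt0 : 0 < Delta by rewrite ltr0n leq_min; lia.
rewrite [Delta * _]mulrC -ler_pdivrMr // le_min => /andP[le_x le_x2].
have x_ge0 : 0 <= x.
  have lam_lt := lambda_lt_sigma2 s_range pd1 pd2.
  by rewrite divr_ge0 ?lambda_s_max_ge0 // subr_ge0 ltW.
have := lambda_ratio_le s_range pd1 pd2; rewrite -/sigma2 -/lam -/x => x_le.
rewrite -lerBrDl; apply: le_trans x_le.
by rewrite ge_max le_x -(ger0_norm x_ge0) -sqrtr_sqr ler_wsqrtr.
Qed.
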